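(* Fix a mobile user $k$, a frame length $T\in\mathbb{N}$, $T\ge 1$, a threshold $\varepsilon\in[0,1]$ and a request probability $\lambda_k\in[0,1]$. For every frame index $q\in\{0,1,2,\ldots\}$, with $\mathcal{T}_q=\{qT,qT+1,\ldots,(q+1)T-1\}$ and $$\Delta\mathcal{L}_k[qT]=\mathbb{E}\left\{\tfrac12 (Y_k[qT+T])^2-\tfrac12 (Y_k[qT])^2 \,\Big|\, Y_k[qT]\right\},$$ we have $$\Delta \mathcal{L}_k[qT]\leq B_{k,2}T+\mathbb{E}\left\{Y_k[qT]\sum_{n\in\mathcal{T}_q}\left(X_k[n]-\varepsilon \right)\,\Big|\, Y_k[qT] \right\},$$ where $B_{k,2}\triangleq \tfrac12(\lambda_k+\varepsilon^2)+\tfrac12(T-1)\left[(1-\varepsilon)\lambda_k+\varepsilon^2\right]$.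
   Context: Time is slotted, $n=0,1,2,\ldots$. In each slot $n$, mobile user $k$ issues a digital-twin synchronization request indicated by $a_k[n]\in\{0,1\}$; the $a_k[n]$ are i.i.d. over slots with $\Pr(a_k[n]=1)=\lambda_k$, and $a_k[n]$ is independent of everything that happened before slot $n$ (in particular, for $n\ge qT$, $a_k[n]$ is independent of $Y_k[qT]$). The synchronization failure indicator $X_k[n]\in\{0,1\}$ equals $1$ only if a request is made and it fails (the twin is migrating during slot $n$, or the synchronization delay exceeds its deadline), so in particular $X_k[n]\le a_k[n]$. The virtual queue is defined by $Y_k[0]=0$ and $Y_k[n+1]=\max\{Y_k[n]+X_k[n]-\varepsilon,\,0\}$. *)

From HB Require Import structures.
From mathcomp Require Import all_boot all_order all_algebra.
From mathcomp Require Import all_classical all_reals all_analysis.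
Set Implicit Arguments. Unset Strict Implicit. Unset Printing Implicit Defensive.
Import Order.TTheory GRing.Theory Num.Theory.
Local Open Scope classical_set_scope.
Local Open Scope ring_scope.

Fixpoint vqueue (R : realType) (T : Type) (X : nat -> T -> R) (eps : R)
    (n : nat) (w : T) : R :=
  match n with
  | 0 => 0
  | n'.+1 => Num.max (vqueue X eps n' w + X n' w - eps) 0
  end.

(* Elementary conditional expectation of Z given the (discrete) random
   variable Y, on the event {Y = y}:  E[Z 1_{Y=y}] / P(Y = y). *)
Definition condexp_at (R : realType) (d : measure_display) (T : measurableType d)
    (P : probability T R) (Z Y : T -> R) (y : R) : R :=
  fine (\int[P]_(w in [set w | Y w = y]) (Z w)%:E) / fine (P [set w | Y w = y]).

(* Squaring Y[n+1] = max (Y[n] + X[n] - eps) 0 gives the one-slot drift bound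
   Y[n+1]^2/2 - Y[n]^2/2 <= Y[n] (X[n] - eps) + (X[n] - eps)^2/2.
   Summed over a frame, each Y[qT+j] is replaced by Y[qT]; since
   -j eps <= Y[qT+j] - Y[qT] <= j (1 - eps) and X[n] in {0,1} with
   X[n] <= a[n], the error made in slot qT+j is at most the affine function
   drift_bound eps j a[qT+j].  Integrating this pathwise inequality over the
   event {Y[qT] = y}, the independence of a[qT+j] from Y[qT] replaces a[qT+j]
   by lam, and the resulting constants add up to B_{k,2} T. *)

From HB Require Import structures.
From mathcomp Require Import all_boot all_order all_algebra.
From mathcomp Require Import all_classical all_reals all_analysis.
From mathcomp Require Import ring lra.
Set Implicit Arguments. Unset Strict Implicit. Unset Printing Implicit Defensive.
Import Order.TTheory GRing.Theory Num.Theory.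
Local Open Scope classical_set_scope.
Local Open Scope ring_scope.

Definition drift_bound {R : realType} (eps j a : R) : R :=
  (2^-1 + j * (1 - eps)) * a + (2^-1 + j) * eps ^+ 2.

Lemma slot_drift_le (R : realType) (eps j x a z : R) :
  0 <= eps <= 1 -> x = 0 \/ x = 1 -> x <= a -> 0 <= a -> 0 <= j ->
  - (j * eps) <= z <= j * (1 - eps) ->
  z * (x - eps) + 2^-1 * (x - eps) ^+ 2 <= drift_bound eps j a.
Proof.
rewrite /drift_bound => /andP[e0 e1] [] -> xa a0 j0 /andP[zlo zhi].
- have : - z * eps <= j * eps * eps by apply: ler_wpM2r; lra.
  have : 0 <= (2^-1 + j * (1 - eps)) * a by apply: mulr_ge0 => //; nra.
  nra.
- have : z * (1 - eps) <= j * (1 - eps) * (1 - eps) by apply: ler_wpM2r; lra.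
  have : 2^-1 + j * (1 - eps) <= (2^-1 + j * (1 - eps)) * a.
    by rewrite -[leLHS]mulr1; apply: ler_wpM2l => //; nra.
  have : j * (1 - eps) * (1 - eps) <= j * (1 - eps) + j * eps ^+ 2 by nra.
  nra.
Qed.

Lemma sum_drift_bound (R : realType) (eps lam : R) (T : nat) :
  \sum_(j < T) drift_bound eps j%:R lam
  = (2^-1 * (lam + eps ^+ 2) + 2^-1 * (T%:R - 1) * ((1 - eps) * lam + eps ^+ 2)) * T%:R.
Proof.
elim: T => [|T IH]; first by rewrite big_ord0 mulr0.
by rewrite big_ord_recr /= IH /drift_bound -(addn1 T) natrD; field.
Qed.

Section VirtualQueue.
Variables (R : realType) (Omega : Type) (X : nat -> Omega -> R) (eps : R).
Local Notation Y := (vqueue X eps).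

Lemma vqueue_ge0 n w : 0 <= Y n w.
Proof. by case: n => //= n; rewrite le_max lexx orbT. Qed.

Lemma vqueue_sqr_drift n w :
  2^-1 * Y n.+1 w ^+ 2 - 2^-1 * Y n w ^+ 2
  <= Y n w * (X n w - eps) + 2^-1 * (X n w - eps) ^+ 2.
Proof.
have sqrY : Y n.+1 w ^+ 2 <= (Y n w + X n w - eps) ^+ 2.
  rewrite /= /Num.max; case: ifP => _ //.
  by rewrite expr2 mul0r sqr_ge0.
have -> : Y n w * (X n w - eps) + 2^-1 * (X n w - eps) ^+ 2
          = 2^-1 * (Y n w + X n w - eps) ^+ 2 - 2^-1 * Y n w ^+ 2 by field.
by rewrite lerD2r ler_wpM2l.
Qed.

Hypothesis eps_le1 : eps <= 1.
Hypothesis X_ge0 : forall n w, 0 <= X n w.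
Hypothesis X_le1 : forall n w, X n w <= 1.

Lemma vqueue_increment_bounds t k w :
  - (k%:R * eps) <= Y (t + k)%N w - Y t w <= k%:R * (1 - eps).
Proof.
elim: k => [|k IH]; first by rewrite addn0 subrr !mul0r oppr0 lexx.
have lo : Y (t + k) w - eps <= Y (t + k).+1 w.
  by rewrite /= le_max; apply/orP; left; have := X_ge0 (t + k) w; lra.
have hi : Y (t + k).+1 w <= Y (t + k) w + 1 - eps.
  rewrite /= ge_max; have := vqueue_ge0 (t + k) w; have := X_le1 (t + k) w.
  by move=> ? ?; apply/andP; split; [rewrite lerD2r lerD2l | have := eps_le1; lra].
by rewrite addnS -addn1 natrD; lra.
Qed.

End VirtualQueue.

Section FrameDrift.
Variables (R : realType) (Omega : Type) (a X : nat -> Omega -> R) (eps : R).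
Hypothesis eps01 : 0 <= eps <= 1.
Hypothesis X01 : forall n w, X n w = 0 \/ X n w = 1.
Hypothesis X_le_a : forall n w, X n w <= a n w.
Hypothesis a_ge0 : forall n w, 0 <= a n w.
Local Notation Y := (vqueue X eps).

Lemma vqueue_frame_drift t k w :
  2^-1 * Y (t + k)%N w ^+ 2 - 2^-1 * Y t w ^+ 2
  <= Y t w * \sum_(t <= n < t + k) (X n w - eps)
     + \sum_(j < k) drift_bound eps j%:R (a (t + j)%N w).
Proof.
elim: k => [|k IH].
  by rewrite addn0 subrr big_geq ?addn0 // big_ord0 mulr0 addr0.
rewrite addnS big_nat_recr ?leq_addr // big_ord_recr /= -/(Y (t + k).+1 w) mulrDr.
have step := vqueue_sqr_drift X eps (t + k)%N w.
have slot : (Y (t + k)%N w - Y t w) * (X (t + k)%N w - eps)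
            + 2^-1 * (X (t + k)%N w - eps) ^+ 2
            <= drift_bound eps k%:R (a (t + k)%N w).
  apply: slot_drift_le => //; apply: vqueue_increment_bounds => [|n v|n v];
    by [case/andP: eps01 | case: (X01 n v) => ->].
have split_Y : Y (t + k)%N w * (X (t + k)%N w - eps)
  = Y t w * (X (t + k)%N w - eps) + (Y (t + k)%N w - Y t w) * (X (t + k)%N w - eps).
  by ring.
lra.
Qed.

End FrameDrift.

Section BoundedMeasurable.
Context {R : realType} {d : measure_display} {Omega : measurableType d}.
Implicit Types f g : Omega -> R.

Definition bounded_measurable f :=
  measurable_fun setT f /\ exists M, forall w, `|f w| <= M.

Lemma bounded_measurable_cst (c : R) : bounded_measurable (fun=> c).
Proof. by split; [exact: measurable_cst | exists `|c|]. Qed.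

Lemma bounded_measurableD f g : bounded_measurable f -> bounded_measurable g ->
  bounded_measurable (fun w => f w + g w).
Proof.
move=> [mf [M fM]] [mg [N gN]]; split; first exact: measurable_realfun.measurable_funD.
by exists (M + N) => w; rewrite (le_trans (ler_normD _ _)) ?lerD.
Qed.

Lemma bounded_measurableB f g : bounded_measurable f -> bounded_measurable g ->
  bounded_measurable (fun w => f w - g w).
Proof.
move=> [mf [M fM]] [mg [N gN]]; split; first exact: measurable_realfun.measurable_funB.
by exists (M + N) => w; rewrite (le_trans (ler_normB _ _)) ?lerD.
Qed.

Lemma bounded_measurableM f g : bounded_measurable f -> bounded_measurable g ->
  bounded_measurable (fun w => f w * g w).
Proof.
move=> [mf [M fM]] [mg [N gN]]; split; first exact: measurable_realfun.measurable_funM.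
by exists (M * N) => w; rewrite normrM ler_pM.
Qed.

Lemma bounded_measurable_max0 f : bounded_measurable f ->
  bounded_measurable (fun w => Num.max (f w) 0).
Proof.
move=> [mf [M fM]]; split.
  exact: measurable_realfun.measurable_maxr mf (measurable_cst (0 : R)).
exists M => w; rewrite /Num.max; case: ifP => _ //.
by rewrite normr0 (le_trans _ (fM w)).
Qed.

Lemma bounded_measurable_sum (I : Type) (s : seq I) (p : pred I)
    (F : I -> Omega -> R) :
  (forall i, bounded_measurable (F i)) ->
  bounded_measurable (fun w => \sum_(i <- s | p i) F i w).
Proof.
move=> bmF; elim: s => [|i s IH].
  by under eq_fun do rewrite big_nil; exact: bounded_measurable_cst.
under eq_fun do rewrite big_cons.
by case: (p i) => //; exact: bounded_measurableD.
Qed.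

Lemma measurable_fun_of_preimages (G : set (set Omega)) f : G `<=` measurable ->
  (forall B, measurable B -> G (f @^-1` B)) -> measurable_fun setT f.
Proof. by move=> Gm Gf _ B mB; rewrite setTI; exact/Gm/Gf. Qed.

Lemma bounded_measurable_01 f : measurable_fun setT f ->
  (forall w, f w = 0 \/ f w = 1) -> bounded_measurable f.
Proof.
move=> mf f01; split => //.
by exists 1 => w; case: (f01 w) => ->; rewrite ?normr0 ?normr1.
Qed.

Lemma bounded_measurable_vqueue (X : nat -> Omega -> R) (eps : R) n :
  (forall n, bounded_measurable (X n)) -> bounded_measurable (vqueue X eps n).
Proof.
move=> bmX; elim: n => [|n IH] /=; first exact: bounded_measurable_cst.
apply: bounded_measurable_max0; apply: bounded_measurableD (bounded_measurable_cst _).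
exact: bounded_measurableD.
Qed.

End BoundedMeasurable.

Section IntegralsOverEvents.
Context {R : realType} {d : measure_display} {Omega : measurableType d}.
Variable P : probability Omega R.
Implicit Types f g : Omega -> R.

Lemma bounded_measurable_integrable D f : measurable D ->
  bounded_measurable f -> P.-integrable D (EFin \o f).
Proof.
move=> mD [mf [M fM]]; apply: measurable_bounded_integrable => //.
- by rewrite (le_lt_trans (probability_le1 P mD)) ?ltry.
- exact: measurable_funS mf.
- exists M; split; first by rewrite num_real.
  by move=> M' MM' w _; exact: le_trans (fM w) (ltW MM').
Qed.

Lemma Rintegral_sum D (I : Type) (s : seq I) (p : pred I)
    (F : I -> Omega -> R) :
  measurable D -> (forall i, bounded_measurable (F i)) ->
  Rintegral P D (fun w => \sum_(i <- s | p i) F i w)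
  = \sum_(i <- s | p i) Rintegral P D (F i).
Proof.
move=> mD bmF; elim: s => [|i s IH].
  under eq_Rintegral do rewrite big_nil.
  by rewrite big_nil Rintegral_cst // mul0r.
under eq_Rintegral do rewrite big_cons.
rewrite big_cons; case: (p i) => //.
rewrite RintegralD ?IH //; apply: bounded_measurable_integrable => //.
exact: bounded_measurable_sum.
Qed.

Lemma Rintegral_affine D f (c e : R) : measurable D -> bounded_measurable f ->
  Rintegral P D (fun w => c * f w + e) = c * Rintegral P D f + e * fine (P D).
Proof.
move=> mD bmf; rewrite RintegralD ?RintegralZl ?Rintegral_cst //.
- exact: bounded_measurable_integrable.
- apply: bounded_measurable_integrable => //.
  exact: bounded_measurableM (bounded_measurable_cst c) bmf.
- exact: bounded_measurable_integrable (bounded_measurable_cst e).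
Qed.

Lemma Rintegral_indicator_valued D f : measurable D -> measurable_fun setT f ->
  (forall w, f w = 0 \/ f w = 1) ->
  Rintegral P D f = fine (P (f @^-1` [set 1] `&` D)).
Proof.
move=> mD mf f01.
have mf1 : measurable (f @^-1` [set 1]).
  by rewrite -[_ @^-1` _]setTI; apply: mf => //; exact: measurable_set1.
rewrite -integral_indic // /Rintegral; congr fine; apply: eq_integral => w _.
congr EFin; rewrite /indic; case: (f01 w) => fw; last by rewrite fw mem_set.
by rewrite fw memNset //= fw => /esym/eqP; rewrite oner_eq0.
Qed.

Lemma Rintegral_frame_drift_bound D (b : nat -> Omega -> R) (eps lam : R) k :
  measurable D -> (forall j, bounded_measurable (b j)) ->
  (forall j, Rintegral P D (b j) = lam * fine (P D)) ->
  Rintegral P D (fun w => \sum_(j < k) drift_bound eps j%:R (b j w))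
  = (\sum_(j < k) drift_bound eps j%:R lam) * fine (P D).
Proof.
move=> mD bmb Eb; rewrite mulr_suml Rintegral_sum //; last first.
  move=> j; apply: bounded_measurableD (bounded_measurable_cst _).
  exact: bounded_measurableM (bounded_measurable_cst _) (bmb j).
apply: eq_bigr => j _; rewrite /drift_bound Rintegral_affine // Eb; ring.
Qed.

Lemma Rintegral_le_add D f g h : measurable D ->
  bounded_measurable f -> bounded_measurable g -> bounded_measurable h ->
  (forall w, D w -> f w <= g w + h w) ->
  Rintegral P D f <= Rintegral P D g + Rintegral P D h.
Proof.
move=> mD bmf bmg bmh fgh.
have int k : bounded_measurable k -> P.-integrable D (EFin \o k).
  exact: bounded_measurable_integrable.
rewrite -RintegralD ?int //; apply: le_Rintegral; rewrite ?int //.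
exact: bounded_measurableD.
Qed.

End IntegralsOverEvents.

Lemma condexp_atE (R : realType) (d : measure_display) (Omega : measurableType d)
    (P : probability Omega R) (Z Y : Omega -> R) (y : R) :
  condexp_at P Z Y y
  = Rintegral P [set w | Y w = y] Z / fine (P [set w | Y w = y]).
Proof. by []. Qed.

Theorem lemma2 (R : realType) (d : measure_display) (Omega : measurableType d)
    (P : probability Omega R)
    (F : nat -> set (set Omega))       (* events that happened before slot n *)
    (a X : nat -> Omega -> R)          (* requests a_k[n], failures X_k[n] *)
    (T : nat) (eps lam : R) :
  (1 <= T)%N ->
  0 <= eps <= 1 ->
  0 <= lam <= 1 ->
  (* history filtration *)
  (forall n, sigma_algebra setT (F n)) ->
  (forall n, F n `<=` measurable) ->
  (forall n, F n `<=` F n.+1) ->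
  (forall n B, measurable B -> F n.+1 (a n @^-1` B)) ->
  (forall n B, measurable B -> F n.+1 (X n @^-1` B)) ->
  (* binary indicators, X_k[n] <= a_k[n] *)
  (forall n w, a n w = 0 \/ a n w = 1) ->
  (forall n w, X n w = 0 \/ X n w = 1) ->
  (forall n w, X n w <= a n w) ->
  (* identically distributed Bernoulli(lam) requests *)
  (forall n, P [set w | a n w = 1] = lam%:E) ->
  (* a_k[n] is independent of everything before slot n *)
  (forall n A B, F n A -> measurable B ->
     P (a n @^-1` B `&` A) = (P (a n @^-1` B) * P A)%E) ->
  (* in particular, a_k[n] is independent of Y_k[qT] for n >= qT *)
  (forall q n B C, (q * T <= n)%N -> measurable B -> measurable C ->
     P (a n @^-1` B `&` vqueue X eps (q * T) @^-1` C)
     = (P (a n @^-1` B) * P (vqueue X eps (q * T) @^-1` C))%E) ->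
  let Y := vqueue X eps in
  let B2 := 2^-1 * (lam + eps ^+ 2)
            + 2^-1 * (T%:R - 1) * ((1 - eps) * lam + eps ^+ 2) in
  forall (q : nat) (y : R), (0 < P [set w | Y (q * T)%N w = y])%E ->
    condexp_at P (fun w => 2^-1 * (Y (q * T + T)%N w) ^+ 2
                           - 2^-1 * (Y (q * T)%N w) ^+ 2) (Y (q * T)%N) y
    <= B2 * T%:R
       + condexp_at P (fun w => Y (q * T)%N w
                         * \sum_(q * T <= n < q * T + T) (X n w - eps))
                    (Y (q * T)%N) y.
Proof.
move=> _ eps01 _ _ Fm _ Fa FX a01 X01 Xa Pa _ indepY Y B2 q y PD_gt0.
set t := (q * T)%N; set D := [set w | Y t w = y]; set p := fine (P D).
have ma n := measurable_fun_of_preimages (Fm n.+1) (Fa n).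
have mX n := measurable_fun_of_preimages (Fm n.+1) (FX n).
have bma n : bounded_measurable (a n) := bounded_measurable_01 (ma n) (a01 n).
have bmX n : bounded_measurable (X n) := bounded_measurable_01 (mX n) (X01 n).
have bmY n : bounded_measurable (Y n) := bounded_measurable_vqueue eps n bmX.
have mD : measurable D.
  by have := (bmY t).1 measurableT _ (measurable_set1 y); rewrite setTI.
have p_gt0 : 0 < p.
  by apply: fine_gt0; rewrite PD_gt0 /= ltey_eq fin_num_measure.
have Ea j : Rintegral P D (a (t + j)%N) = lam * p.
  rewrite (Rintegral_indicator_valued P mD (ma _) (a01 _)).
  have := indepY q (t + j)%N _ _ (leq_addr _ _) (measurable_set1 1) (measurable_set1 y).
  by rewrite Pa -/t => ->; rewrite -(fineK (fin_num_measure P D mD)) -EFinM.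
rewrite !condexp_atE -/D -/p ler_pdivrMr // mulrDl divfK ?gt_eqF // /B2.
rewrite -sum_drift_bound -(Rintegral_frame_drift_bound eps T mD (fun j => bma _) Ea).
rewrite addrC; apply: Rintegral_le_add => //.
- apply: bounded_measurableB; apply: bounded_measurableM (bounded_measurable_cst _) _;
  exact: bounded_measurableM.
- apply: bounded_measurableM => //; apply: bounded_measurable_sum => n.
  exact: bounded_measurableB (bounded_measurable_cst _).
- apply: bounded_measurable_sum => j; apply: bounded_measurableD (bounded_measurable_cst _).
  exact: bounded_measurableM (bounded_measurable_cst _) _.
- have a_ge0 n w : 0 <= a n w by case: (a01 n w) => ->.
  by move=> w _; exact: vqueue_frame_drift.
Qed.
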